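(* Let $(V_1,\dots,V_n)$ be an $n$-tuple of doubly non-commuting isometries on $H$, let $A=\{i_1,\dots,i_l\}\subseteq\{1,\dots,n\}$ ($l$ distinct indices, possibly $l=0$) with $A^c=\{j_1,\dots,j_{n-l}\}$, and let $W_A=\bigcap_{m_{j_1},\dots,m_{j_{n-l}}\ge0}V_{j_1}^{m_{j_1}}\cdots V_{j_{n-l}}^{m_{j_{n-l}}}\big(\bigcap_{i\in A}\ker V_i^*\big)$ (for $A=\emptyset$ read $\bigcap_{i\in A}\ker V_i^*$ as $H$; for $A=\{1,\dots,n\}$, $W_A=\bigcap_{i=1}^n\ker V_i^*$). Then $W_A\subseteq H_A$ and $H_A=\bigoplus_{k_{i_1},\dots,k_{i_l}\ge0}V_{i_1}^{k_{i_1}}\cdots V_{i_l}^{k_{i_l}}(W_A)$ as an orthogonal Hilbert direct sum (for $A=\emptyset$ this reads $H_\emptyset=W_\emptyset$). Furthermore: (1) for every $i\in A^c$, $W_A$ reduces $V_i$ and $V_i|_{W_A}$ is unitary; (2) $(V_i|_{W_A})^*(V_j|_{W_A})=\overline{z_{ij}}(V_j|_{W_A})(V_i|_{W_A})^*$ for all $i\ne j$ in $A^c$; (3) $V_i^*|_{W_A}=0$ for every $i\in A$; (4) for all $r\in\{1,\dots,l\}$ and $k_{i_1},\dots,k_{i_l}\ge0$, $V_{i_r}\big(V_{i_1}^{k_{i_1}}\cdots V_{i_r}^{k_{i_r}}\cdots V_{i_l}^{k_{i_l}}(W_A)\big)=V_{i_1}^{k_{i_1}}\cdots V_{i_r}^{k_{i_r}+1}\cdots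 V_{i_l}^{k_{i_l}}(W_A)$.
   Context: Fix $n\ge1$ and $z_{ij}\in\mathbb T$ ($i\ne j$) with $z_{ji}=\overline{z_{ij}}$; $(V_1,\dots,V_n)$ is doubly non-commuting if the $V_i$ are isometries on $H$ with $V_i^*V_j=\overline{z_{ij}}V_jV_i^*$ for $i\ne j$. For an isometry $S$: $H^{\mathrm{iso}}(S)=\bigoplus_{k\ge0}S^k(\ker S^* )$, $H^{\mathrm{uni}}(S)=\bigcap_{k\ge0}S^k(H)$. With $P_i^{\mathrm{iso}},P_i^{\mathrm{uni}}$ the (pairwise commuting) projections onto $H^{\mathrm{iso}}(V_i),H^{\mathrm{uni}}(V_i)$, set $H_A=\big(\prod_{i\in A}P_i^{\mathrm{iso}}\prod_{i\in A^c}P_i^{\mathrm{uni}}\big)(H)$, where $A^c$ is the complement in $\{1,\dots,n\}$ and empty products are the identity. Subspaces are closed. *)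

From mathcomp Require Import all_boot all_algebra.
From mathcomp Require Import reals complex.
From Stdlib Require Import ClassicalEpsilon.
Set Implicit Arguments.
Unset Strict Implicit.
Unset Printing Implicit Defensive.
Import GRing.Theory Num.Theory.
Local Open Scope ring_scope.

Section Hilbert.
Variable R : realType.
Variable H : lmodType R[i].
Variable ip : H -> H -> R[i].

Definition hnorm (x : H) : R := Num.sqrt (complex.Re (ip x x)).

Definition cauchy_seq (u : nat -> H) : Prop :=
  forall e : R, 0 < e -> exists N : nat, forall p q : nat,
    (N <= p)%N -> (N <= q)%N -> hnorm (u p - u q) < e.

Definition converges_to (u : nat -> H) (l : H) : Prop :=
  forall e : R, 0 < e -> exists N : nat, forall p : nat,
    (N <= p)%N -> hnorm (u p - l) < e.

Definition is_hilbert : Prop :=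
  [/\ (forall (a : R[i]) (x y w : H), ip (a *: x + y) w = a * ip x w + ip y w),
      (forall x y : H, ip y x = (ip x y)^*),
      (forall x : H, 0 <= ip x x),
      (forall x : H, ip x x = 0 -> x = 0) &
      (forall u : nat -> H, cauchy_seq u -> exists l : H, converges_to u l)].

Definition seteq (M N : H -> Prop) : Prop := forall x, M x <-> N x.

Definition subspace (M : H -> Prop) : Prop :=
  M 0 /\ (forall (a : R[i]) (x y : H), M x -> M y -> M (a *: x + y)).

Definition closed_set (M : H -> Prop) : Prop :=
  forall (u : nat -> H) (l : H), (forall p, M (u p)) -> converges_to u l -> M l.

Definition closed_subspace (M : H -> Prop) : Prop := subspace M /\ closed_set M.

Definition closed_span (U : H -> Prop) : H -> Prop :=
  fun x => forall M, closed_subspace M -> (forall y, U y -> M y) -> M x.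

Definition orth_dsum (I : Type) (F : I -> H -> Prop) (X : H -> Prop) : Prop :=
  [/\ (forall k, closed_subspace (F k)),
      (forall k k', k <> k' -> forall x y, F k x -> F k' y -> ip x y = 0) &
      seteq X (closed_span (fun y => exists k, F k y))].

Definition img (T : H -> H) (M : H -> Prop) : H -> Prop :=
  fun y => exists x, M x /\ y = T x.

Definition kerS (T : H -> H) : H -> Prop := fun x => T x = 0.

Definition h_isometry (T : {linear H -> H}) : Prop :=
  forall x, hnorm (T x) = hnorm x.

Definition h_adjoint (T S : H -> H) : Prop :=
  forall x y, ip (T x) y = ip x (S y).

(* orthogonal projection onto M (well defined when M is a closed subspace) *)
Definition orthproj (M : H -> Prop) (x : H) : H :=
  epsilon (inhabits (0 : H))
    (fun y => M y /\ forall w, M w -> ip (x - y) w = 0).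

(* H^iso(S) = closed span of the S^k(ker S^* ), k >= 0; Sa is the adjoint of S *)
Definition Hiso (S Sa : H -> H) : H -> Prop :=
  closed_span (fun y => exists k : nat, img (iter k S) (kerS Sa) y).

Definition Huni (S : H -> H) : H -> Prop :=
  fun x => forall k : nat, img (iter k S) (fun _ => True) x.

Variable n : nat.

Definition prodV (V : 'I_n -> H -> H) (s : seq 'I_n) (m : 'I_n -> nat) : H -> H :=
  foldr (fun j f => fun x => iter (m j) (V j) (f x)) id s.

(* H_A = (prod_{i in A} P_i^iso prod_{i in A^c} P_i^uni)(H) *)
Definition HA (V : 'I_n -> H -> H) (Va : 'I_n -> H -> H) (A : {set 'I_n}) : H -> Prop :=
  let Puni := foldr (fun j f => fun x => orthproj (Huni (V j)) (f x)) id (enum (~: A)) in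
  let P := foldr (fun i f => fun x => orthproj (Hiso (V i) (Va i)) (f x)) Puni (enum A) in
  img P (fun _ => True).

Definition WA (V : 'I_n -> H -> H) (Va : 'I_n -> H -> H) (A : {set 'I_n}) : H -> Prop :=
  fun x => forall m : 'I_n -> nat,
    img (prodV V (enum (~: A)) m) (fun y => forall i, i \in A -> Va i y = 0) x.

End Hilbert.

From mathcomp Require Import all_boot all_order all_algebra.
From mathcomp Require Import reals complex classical_sets.
From mathcomp Require Import ring lra.
From Stdlib Require Import ClassicalEpsilon FunctionalExtensionality ProofIrrelevance.

(* Since V_i^* V_j = conj(z_ij) V_j V_i^*, also V_i V_j = z_ij V_j V_i, so ker V_i^*, H^iso(V_i)
   and H^uni(V_i) reduce every V_j with j <> i, and H^uni(V_i) also reduces V_i.  Hence each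
   projection P_i^iso, P_i^uni preserves the other subspaces, and H_A is the set of vectors
   lying in H^iso(V_i) for i in A and in H^uni(V_j) for j outside A; likewise W_A is the set
   of vectors lying in ker V_i^* for i in A and in H^uni(V_j) for j outside A, which gives
   (1)-(3).  Two pieces V^k W_A and V^k' W_A with k_i < k'_i are orthogonal: once V_i^(k_i)
   cancels, the left vector lies in ker V_i^* and the right one in the range of V_i.  A vector
   u of H_A orthogonal to all pieces is peeled one index i of A at a time: the wandering parts
   (1 - V_i V_i^* ) (V_i^* )^t u satisfy the same hypotheses for the remaining indices, hence
   vanish, and a vector of H^iso(V_i) without wandering parts is zero. *)

Set Implicit Arguments.
Unset Strict Implicit.
Unset Printing Implicit Defensive.
Import Order.TTheory GRing.Theory Num.Theory.
Local Open Scope complex_scope.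
Local Open Scope ring_scope.

Lemma ReD (R : rcfType) (a b : R[i]) : complex.Re (a + b) = complex.Re a + complex.Re b.
Proof. by case: a; case: b. Qed.

Lemma ReN (R : rcfType) (a : R[i]) : complex.Re (- a) = - complex.Re a.
Proof. by case: a. Qed.

Lemma ReJ (R : rcfType) (a : R[i]) : complex.Re a^* = complex.Re a.
Proof. by case: a. Qed.

Lemma ReMl (R : rcfType) (k : R) (a : R[i]) : complex.Re (k%:C * a) = k * complex.Re a.
Proof. by case: a => x y /=; rewrite mul0r subr0. Qed.

Lemma conjC_real (R : rcfType) (k : R) : k%:C^* = k%:C :> R[i].
Proof. by apply/eqP; rewrite eq_complex /= oppr0 !eqxx. Qed.

Lemma Re_conjM_eq0 (R : rcfType) (c : R[i]) : complex.Re (c^* * c) = 0 -> c = 0.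
Proof.
case: c => a b /=; rewrite mulNr opprK => h.
by apply/eqP; rewrite eq_complex /=; apply/andP; split; apply/eqP; nra.
Qed.

Lemma quadratic_discriminant (R : realFieldType) (X Y r : R) : 0 <= X -> 0 <= Y ->
  (forall t, 0 <= X + 2 * t * r + t ^+ 2 * Y) -> r ^+ 2 <= X * Y.
Proof.
move=> X0 Y0 h.
have [Yz|Yp] := eqVneq Y 0.
  subst Y; have [rz|rn] := eqVneq r 0; first by subst r; rewrite expr0n mulr0.
  have := h (- (X + 1) / (2 * r)).
  have -> : X + 2 * (- (X + 1) / (2 * r)) * r + (- (X + 1) / (2 * r)) ^+ 2 * 0 = -1.
    by field; rewrite rn.
  by rewrite ler0N1.
have Ypos : 0 < Y by rewrite lt_neqAle eq_sym Yp Y0.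
have := h (- r / Y).
have -> : X + 2 * (- r / Y) * r + (- r / Y) ^+ 2 * Y = (X * Y - r ^+ 2) / Y by field.
by rewrite pmulr_lge0 ?invr_gt0 // subr_ge0.
Qed.

Lemma ler_sqr_le (R : realDomainType) (c d : R) : 0 <= d -> c ^+ 2 <= d ^+ 2 -> c <= d.
Proof. by move=> *; nra. Qed.

Lemma sqr_le_eps_eq0 (R : realFieldType) (r K : R) : 0 <= K ->
  (forall e, 0 < e -> r ^+ 2 <= e * K) -> r = 0.
Proof.
move=> K0 h; suff : r ^+ 2 <= 0 by move=> ?; nra.
apply/ler_addgt0Pr => e e0; rewrite add0r.
have e1 : 0 < e / (K + 1) by rewrite divr_gt0 // ltr_wpDl.
apply: (le_trans (h _ e1)).
by rewrite mulrAC ler_pdivrMr ?ltr_wpDl //; nra.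
Qed.

Lemma inv_succ_lt (R : realType) (e : R) : 0 < e ->
  exists N : nat, forall p, (N <= p)%N -> (p.+1%:R)^-1 < e.
Proof.
move=> e0; exists (Num.Def.archi_bound e^-1) => p hp.
have h1 : e^-1 < (Num.Def.archi_bound e^-1)%:R by rewrite archi_boundP // invr_ge0 ltW.
have h2 : (Num.Def.archi_bound e^-1)%:R <= p.+1%:R :> R by rewrite ler_nat leqW.
by rewrite invf_plt ?posrE ?ltr0Sn //; apply: lt_le_trans h1 h2.
Qed.

Section LinearPredicate.
Variables (K : pzRingType) (U : lmodType K).

Section OneMap.
Variable T : U -> U.
Hypothesis linT : linear T.

Lemma lin0 : T 0 = 0.
Proof.
have h := linT 1 0 0; rewrite scale1r !addr0 scale1r in h.
by apply: (@addrI _ (T 0)); rewrite addr0 -h.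
Qed.

Lemma linD x y : T (x + y) = T x + T y.
Proof. by have := linT 1 x y; rewrite !scale1r. Qed.

Lemma linZ a x : T (a *: x) = a *: T x.
Proof. by have := linT a x 0; rewrite !addr0 lin0 addr0. Qed.

Lemma linN x : T (- x) = - T x.
Proof. by rewrite -scaleN1r linZ scaleN1r. Qed.

Lemma linB x y : T (x - y) = T x - T y.
Proof. by rewrite linD linN. Qed.

End OneMap.

Lemma linear_comp (T1 T2 : U -> U) : linear T1 -> linear T2 -> linear (T1 \o T2).
Proof. by move=> h1 h2 a x y /=; rewrite h2 h1. Qed.

Lemma linear_iter (T : U -> U) t : linear T -> linear (iter t T).
Proof. by move=> linT; elim: t => [|t IH] a x y //=; rewrite IH linT. Qed.

Lemma iter_comm_scale (F G : U -> U) (c : K) : linear G ->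
  (forall x, F (G x) = c *: G (F x)) ->
  forall t x, F (iter t G x) = c ^+ t *: iter t G (F x).
Proof.
move=> linG hc; elim=> [|t IH] x /=; first by rewrite expr0 scale1r.
by rewrite hc IH linZ // scalerA exprS.
Qed.

End LinearPredicate.

Lemma iter_stable (T : Type) (F : T -> T) (P : T -> Prop) t x :
  (forall y, P y -> P (F y)) -> P x -> P (iter t F x).
Proof. by move=> h; elim: t => //= t IH /IH /h. Qed.

(** * Hilbert spaces and orthogonal projections *)

Section InnerProductSpace.
Variable R : realType.
Variable H : lmodType R[i].
Variable ip : H -> H -> R[i].
Hypothesis hH : is_hilbert ip.

Lemma ipPl a x y w : ip (a *: x + y) w = a * ip x w + ip y w.
Proof. by case: hH. Qed.

Lemma ipC x y : ip y x = (ip x y)^*.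
Proof. by case: hH. Qed.

Lemma ip_ge0 x : 0 <= ip x x.
Proof. by case: hH. Qed.

Lemma ip_eq0 x : ip x x = 0 -> x = 0.
Proof. by case: hH => _ _ _ /(_ x). Qed.

Lemma cauchy_seq_converges u : cauchy_seq ip u -> exists l, converges_to ip u l.
Proof. by case: hH => _ _ _ _ /(_ u). Qed.

Lemma ip0l w : ip 0 w = 0.
Proof.
have h := ipPl 1 0 0 w; rewrite scale1r addr0 mul1r in h.
by apply: (@addrI _ (ip 0 w)); rewrite addr0 -h.
Qed.

Lemma ipZl a x w : ip (a *: x) w = a * ip x w.
Proof. by have := ipPl a x 0 w; rewrite addr0 ip0l addr0. Qed.

Lemma ipDl x y w : ip (x + y) w = ip x w + ip y w.
Proof. by have := ipPl 1 x y w; rewrite scale1r mul1r. Qed.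

Lemma ipNl x w : ip (- x) w = - ip x w.
Proof. by rewrite -scaleN1r ipZl mulN1r. Qed.

Lemma ipBl x y w : ip (x - y) w = ip x w - ip y w.
Proof. by rewrite ipDl ipNl. Qed.

Lemma ip0r w : ip w 0 = 0.
Proof. by rewrite ipC ip0l conjC0. Qed.

Lemma ipZr a x w : ip w (a *: x) = a^* * ip w x.
Proof. by rewrite ipC ipZl rmorphM /= -ipC. Qed.

Lemma ipDr x y w : ip w (x + y) = ip w x + ip w y.
Proof. by rewrite ipC ipDl rmorphD /= -!ipC. Qed.

Lemma ipNr x w : ip w (- x) = - ip w x.
Proof. by rewrite ipC ipNl rmorphN /= -ipC. Qed.

Lemma ipBr x y w : ip w (x - y) = ip w x - ip w y.
Proof. by rewrite ipDr ipNr. Qed.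

Lemma ip_extr x y : (forall w, ip w x = ip w y) -> x = y.
Proof. by move=> h; apply/eqP; rewrite -subr_eq0; apply/eqP/ip_eq0; rewrite ipBr h subrr. Qed.

Definition sqnorm x : R := complex.Re (ip x x).

Lemma ip_sqnorm x : ip x x = (sqnorm x)%:C.
Proof. by have := ip_ge0 x; rewrite lecE /sqnorm; case: (ip x x) => a b /= /andP[/eqP -> _]. Qed.

Lemma sqnorm_ge0 x : 0 <= sqnorm x.
Proof. by have := ip_ge0 x; rewrite ip_sqnorm lecR. Qed.

Lemma sqnormD x y : sqnorm (x + y) = sqnorm x + 2 * complex.Re (ip x y) + sqnorm y.
Proof. by rewrite /sqnorm ipDl !ipDr (ipC y x) !ReD ReJ; lra. Qed.

Lemma sqnormN x : sqnorm (- x) = sqnorm x.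
Proof. by rewrite /sqnorm ipNl ipNr opprK. Qed.

Lemma sqnormZ (t : R) x : sqnorm (t%:C *: x) = t ^+ 2 * sqnorm x.
Proof. by rewrite /sqnorm ipZl ipZr conjC_real mulrA ip_sqnorm -rmorphM /= mulr0 subr0 expr2. Qed.

Lemma Re_ipZr (t : R) x y : complex.Re (ip x (t%:C *: y)) = t * complex.Re (ip x y).
Proof. by rewrite ipZr conjC_real ReMl. Qed.

Lemma parallelogram a b : sqnorm (a - b) + sqnorm (a + b) = 2 * sqnorm a + 2 * sqnorm b.
Proof. by rewrite !sqnormD sqnormN ipNr ReN; lra. Qed.

Lemma cauchy_schwarz x y : complex.Re (ip x y) ^+ 2 <= sqnorm x * sqnorm y.
Proof.
apply: quadratic_discriminant; [exact: sqnorm_ge0 | exact: sqnorm_ge0 | move=> t].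
by have := sqnorm_ge0 (x + t%:C *: y); rewrite sqnormD sqnormZ Re_ipZr mulrA.
Qed.

Lemma hnorm_ge0 x : 0 <= hnorm ip x.
Proof. exact: sqrtr_ge0. Qed.

Lemma hnorm_sq x : hnorm ip x ^+ 2 = sqnorm x.
Proof. by rewrite sqr_sqrtr // sqnorm_ge0. Qed.

Lemma hnorm_eq0 x : hnorm ip x = 0 -> x = 0.
Proof.
move=> h; apply: ip_eq0; rewrite ip_sqnorm -hnorm_sq h.
by rewrite expr0n.
Qed.

Lemma hnorm0 : hnorm ip 0 = 0.
Proof. by rewrite /hnorm ip0l sqrtr0. Qed.

Lemma hnormN x : hnorm ip (- x) = hnorm ip x.
Proof. by rewrite /hnorm -!/(sqnorm _) sqnormN. Qed.

Lemma hnorm_distC x y : hnorm ip (x - y) = hnorm ip (y - x).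
Proof. by rewrite -hnormN opprB. Qed.

Lemma hnorm_le x y : (hnorm ip x <= hnorm ip y) = (sqnorm x <= sqnorm y).
Proof. by rewrite ler_sqrt // sqnorm_ge0. Qed.

Lemma hnorm_lt x e : 0 <= e -> (hnorm ip x < e) = (sqnorm x < e ^+ 2).
Proof.
move=> e0; have [e_eq0|e_gt0] := eqVneq e 0.
  by rewrite e_eq0 expr0n /= !ltNge hnorm_ge0 sqnorm_ge0.
by rewrite -{1}(ger0_norm e0) -sqrtr_sqr ltr_sqrt // exprn_gt0 // lt_neqAle eq_sym e_gt0.
Qed.

Lemma Re_ip_le x y : complex.Re (ip x y) <= hnorm ip x * hnorm ip y.
Proof.
apply: ler_sqr_le; first exact: mulr_ge0 (hnorm_ge0 x) (hnorm_ge0 y).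
by rewrite exprMn !hnorm_sq cauchy_schwarz.
Qed.

Lemma hnormD x y : hnorm ip (x + y) <= hnorm ip x + hnorm ip y.
Proof.
apply: ler_sqr_le; first exact: addr_ge0 (hnorm_ge0 x) (hnorm_ge0 y).
by rewrite sqrrD !hnorm_sq sqnormD; have := Re_ip_le x y; lra.
Qed.

Lemma hnorm_distD x y w : hnorm ip (x - w) <= hnorm ip (x - y) + hnorm ip (y - w).
Proof.
have -> : x - w = (x - y) + (y - w) by rewrite addrA subrK.
exact: hnormD.
Qed.

Lemma converges_to_unique u l l' : converges_to ip u l -> converges_to ip u l' -> l = l'.
Proof.
move=> hl hl'; apply/eqP; rewrite -subr_eq0; apply/eqP/hnorm_eq0/eqP.
rewrite eq_le hnorm_ge0 andbT; apply/ler_addgt0Pr => e e0; rewrite add0r.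
have e2 : 0 < e / 2 by rewrite divr_gt0.
have [N hN] := hl _ e2; have [N' hN'] := hl' _ e2.
have := hN (maxn N N') (leq_maxl _ _); have := hN' (maxn N N') (leq_maxr _ _).
have := hnorm_distD l (u (maxn N N')) l'; rewrite (hnorm_distC l (u _)); lra.
Qed.

Lemma converges_to_cauchy u l : converges_to ip u l -> cauchy_seq ip u.
Proof.
move=> hl e e0; have e2 : 0 < e / 2 by rewrite divr_gt0.
have [N hN] := hl _ e2; exists N => p q hp hq.
have := hN p hp; have := hN q hq.
have := hnorm_distD (u p) l (u q); rewrite (hnorm_distC l (u q)); lra.
Qed.

Lemma converges_to_map T u l : linear T -> (forall x, hnorm ip (T x) <= hnorm ip x) ->
  converges_to ip u l -> converges_to ip (T \o u) (T l).
Proof.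
move=> linT hT hl e e0; have [N hN] := hl e e0; exists N => p hp.
by rewrite /= -linB //; apply: le_lt_trans (hT _) (hN p hp).
Qed.

Lemma subspaceD (M : H -> Prop) x y : subspace M -> M x -> M y -> M (x + y).
Proof. by case=> _ h mx my; have := h 1 x y mx my; rewrite scale1r. Qed.

Lemma subspaceZ (M : H -> Prop) a x : subspace M -> M x -> M (a *: x).
Proof. by case=> h0 h mx; have := h a x 0 mx h0; rewrite addr0. Qed.

Lemma subspaceB (M : H -> Prop) x y : subspace M -> M x -> M y -> M (x - y).
Proof. by move=> hM mx my; rewrite -scaleN1r; apply: subspaceD => //; apply: subspaceZ. Qed.

Lemma closed_subspace_preim (M : H -> Prop) T : closed_subspace ip M -> linear T ->
  (forall x, hnorm ip (T x) <= hnorm ip x) -> closed_subspace ip (M \o T).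
Proof.
move=> [[M0 MP] Mc] linT hT; split; first split.
- by rewrite /= lin0.
- by move=> a x y mx my; rewrite /= linT; apply: MP.
- by move=> u l hu hl; apply: (Mc (T \o u)) => //; apply: converges_to_map.
Qed.

Lemma closed_subspace_zero : closed_subspace ip (eq^~ 0).
Proof.
split; first by split => // a x y -> ->; rewrite scaler0 addr0.
move=> u l hu hl; apply: esym; apply: (converges_to_unique (u := u)) => //.
by move=> e e0; exists 0%N => p _; rewrite hu subrr hnorm0.
Qed.

Lemma closed_subspace_orth w : closed_subspace ip (fun x => ip x w = 0).
Proof.
split; first split.
- exact: ip0l.
- by move=> a x y hx hy; rewrite ipPl hx hy mulr0 addr0.
move=> u l hu hl /=.
(* [Re <_, w'>] is continuous by Cauchy-Schwarz; then take [w' := <l, w> w] *)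
have Re_eq0 w' : (forall p, ip (u p) w' = 0) -> complex.Re (ip l w') = 0.
  move=> hw'; apply: (sqr_le_eps_eq0 (sqnorm_ge0 w')) => e e0.
  have [N hN] : exists N, forall p, (N <= p)%N -> hnorm ip (u p - l) < Num.sqrt e.
    by apply: hl; rewrite sqrtr_gt0.
  rewrite -[ip l w'](subr0) -(hw' N) -ipBl; apply: (le_trans (cauchy_schwarz _ _)).
  apply: ler_wpM2r; first exact: sqnorm_ge0.
  rewrite -hnorm_sq hnorm_distC -(sqr_sqrtr (ltW e0)) ler_pXn2r ?nnegrE ?hnorm_ge0 ?sqrtr_ge0 //.
  exact: ltW (hN N (leqnn N)).
apply: Re_conjM_eq0; rewrite -ipZr; apply: Re_eq0 => p.
by rewrite ipZr hu mulr0.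
Qed.

Lemma closed_subspace_span U : closed_subspace ip (closed_span ip U).
Proof.
split; first split.
- by move=> M [[M0 _] _] _.
- by move=> a x y hx hy M hM hU; case: (hM) => [[_ MP] _]; apply: MP; [exact: hx | exact: hy].
- by move=> u l hu hl M hM hU; case: (hM) => [_ Mc]; apply: (Mc u) => // p; exact: hu.
Qed.

Lemma mem_closed_span (U : H -> Prop) x : U x -> closed_span ip U x.
Proof. by move=> hx M _ hU; apply: hU. Qed.

Lemma closed_span_min (U M : H -> Prop) x : closed_subspace ip M -> (forall y, U y -> M y) ->
  closed_span ip U x -> M x.
Proof. by move=> hM hU hx; apply: hx. Qed.

Lemma subspace_img (T : H -> H) (M : H -> Prop) : linear T -> subspace M -> subspace (img T M).
Proof.
move=> linT [M0 MP]; split; first by exists 0; rewrite lin0.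
move=> a _ _ [x [mx ->]] [y [my ->]]; exists (a *: x + y).
by rewrite linT; split => //; apply: MP.
Qed.

(* the preimages of a convergent sequence form a Cauchy sequence *)
Lemma closed_img_isometry (T : H -> H) (M : H -> Prop) : linear T ->
  (forall x, hnorm ip (T x) = hnorm ip x) -> closed_set ip M -> closed_set ip (img T M).
Proof.
move=> linT hT hM u l hu hl.
pose w p := epsilon (inhabits 0) (fun x => M x /\ u p = T x).
have hw p : M (w p) /\ u p = T (w p).
  apply: (epsilon_spec (inhabits 0) (fun x => M x /\ u p = T x)).
  by have [x [mx ->]] := hu p; exists x.
have [x hx] : exists x, converges_to ip w x.
  apply: cauchy_seq_converges => e e0.
  have [N hN] := converges_to_cauchy hl e0; exists N => p q hp hq.
  by rewrite -hT linB // -!(proj2 (hw _)); apply: hN.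
exists x; split; first by apply: (hM w) => // p; exact: (hw p).1.
apply: (converges_to_unique hl) => e e0; have [N hN] := hx e e0; exists N => p hp.
by rewrite (hw p).2 -linB // hT; apply: hN.
Qed.

Lemma min_dist_orth (M : H -> Prop) x m : subspace M -> M m ->
  (forall m', M m' -> hnorm ip (x - m) <= hnorm ip (x - m')) ->
  forall w, M w -> ip (x - m) w = 0.
Proof.
move=> hM Mm hmin.
have Re_eq0 w : M w -> complex.Re (ip (x - m) w) = 0.
  move=> Mw; suff : complex.Re (ip (x - m) w) ^+ 2 <= 0 by move=> ?; nra.
  rewrite -(mul0r (sqnorm w)); apply: quadratic_discriminant (lexx _) (sqnorm_ge0 _) _ => t.
  have := hmin (m - t%:C *: w) (subspaceB hM Mm (subspaceZ _ hM Mw)).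
  rewrite hnorm_le (_ : x - (m - t%:C *: w) = (x - m) + t%:C *: w).
    by rewrite (sqnormD (x - m)) sqnormZ Re_ipZr; lra.
  by rewrite opprB addrA addrAC.
move=> w Mw; apply: Re_conjM_eq0; rewrite -ipZr; apply: Re_eq0.
exact: subspaceZ.
Qed.

Lemma sqnorm_add_sub_mid x p q :
  sqnorm ((x - q) + (x - p)) = 4 * sqnorm (x - (2^-1)%:C *: (q + p)).
Proof.
have two : (2 : R)%:C = 2%:R by rewrite rmorph_nat.
rewrite (_ : 4 = 2 ^+ 2 :> R) ?(natrX R 2 2) // -sqnormZ.
rewrite scalerBr scalerA -rmorphM /= mulfV ?pnatr_eq0 //.
by rewrite scale1r two scaler_nat mulr2n opprD addrACA.
Qed.

Definition dist_to (M : H -> Prop) x := inf [set r : R | exists2 m, M m & r = hnorm ip (x - m)].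

Section ProjectionTheorem.
Variables (M : H -> Prop) (x : H).
Hypothesis hM : closed_subspace ip M.

Local Notation dist := (dist_to M x).

Let dists_has_inf : has_inf [set r : R | exists2 m, M m & r = hnorm ip (x - m)].
Proof.
split; first by exists (hnorm ip (x - 0)), 0 => //; case: hM => -[].
by exists 0 => r [m _ ->]; exact: hnorm_ge0.
Qed.

Let dist_le m : M m -> dist <= hnorm ip (x - m).
Proof. by move=> Mm; apply: ge_inf; [case: dists_has_inf | exists m]. Qed.

Let dist_ge0 : 0 <= dist.
Proof. by apply: lb_le_inf; [case: dists_has_inf | move=> r [m _ ->]; exact: hnorm_ge0]. Qed.

Let sqnorm_sub_near_min p q c : M p -> M q ->
  hnorm ip (x - p) <= dist + c -> hnorm ip (x - q) <= dist + c -> 0 <= c ->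
  sqnorm (p - q) <= 4 * c * (2 * dist + c).
Proof.
move=> Mp Mq hp hq c0.
have := parallelogram (x - q) (x - p); rewrite sqnorm_add_sub_mid.
have -> : x - q - (x - p) = p - q by rewrite opprB addrC subrKA.
have hmid : dist ^+ 2 <= sqnorm (x - (2^-1)%:C *: (q + p)).
  rewrite -hnorm_sq ler_pXn2r ?nnegrE ?dist_ge0 ?hnorm_ge0 //; apply: dist_le.
  by case: hM => hMs _; apply: subspaceZ hMs (subspaceD hMs Mq Mp).
have sq_le y : hnorm ip y <= dist + c -> sqnorm y <= (dist + c) ^+ 2.
  by move=> hy; rewrite -hnorm_sq ler_pXn2r ?nnegrE ?hnorm_ge0 ?addr_ge0.
by have := sq_le _ hp; have := sq_le _ hq; lra.
Qed.

Let minimizing_cauchy (ms : nat -> H) : (forall p, M (ms p)) ->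
  (forall p, hnorm ip (x - ms p) < dist + (p.+1%:R)^-1) -> cauchy_seq ip ms.
Proof.
move=> Mms hms e e0; have d0 := dist_ge0.
have near_min N p : (N <= p)%N -> hnorm ip (x - ms p) <= dist + (N.+1%:R)^-1.
  move=> hp; apply/ltW/(lt_le_trans (hms p)); rewrite lerD2l.
  by rewrite lef_pV2 ?posrE ?ltr0Sn // ler_nat.
have e' : 0 < e ^+ 2 / (4 * (2 * dist + 1)) by apply: divr_gt0; [exact: exprn_gt0 | lra].
have [N hN] := inv_succ_lt e'; exists N => p q hp hq; rewrite hnorm_lt ?ltW //.
have c_gt0 : 0 < (N.+1%:R)^-1 :> R by rewrite invr_gt0 ltr0Sn.
have c_le1 : (N.+1%:R)^-1 <= 1 :> R by rewrite invf_le1 ?ler1n ?ltr0Sn.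
have := sqnorm_sub_near_min (Mms p) (Mms q) (near_min _ _ hp) (near_min _ _ hq) (ltW c_gt0).
have := hN N (leqnn N); rewrite ltr_pdivlMr ?mulr_gt0 //; last by lra.
by move: c_gt0 c_le1; move: (N.+1%:R)^-1 => c; nra.
Qed.

Let dist_attained : exists2 m, M m & hnorm ip (x - m) <= dist.
Proof.
pose P p m := M m /\ hnorm ip (x - m) < dist + (p.+1%:R)^-1.
pose ms p := epsilon (inhabits 0) (P p).
have hms p : P p (ms p).
  apply: (epsilon_spec (inhabits 0) (P p)).
  have pos : 0 < (p.+1%:R)^-1 :> R by rewrite invr_gt0 ltr0Sn.
  by have [_ [m Mm ->]] := inf_adherent pos dists_has_inf; exists m.
have [m hm] := cauchy_seq_converges (minimizing_cauchy (fun p => (hms p).1) (fun p => (hms p).2)).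
have Mm : M m by case: hM => _ Mc; apply: (Mc ms) => // p; exact: (hms p).1.
exists m => //; apply/ler_addgt0Pr => e e0.
have e2 : 0 < e / 2 by rewrite divr_gt0.
have [N1 hN1] := inv_succ_lt e2; have [N2 hN2] := hm _ e2.
pose p := maxn N1 N2.
have h1 : hnorm ip (x - ms p) <= dist + e / 2.
  by apply/ltW/(lt_trans (hms p).2); rewrite ltrD2l; apply: hN1; rewrite leq_maxl.
have h2 : hnorm ip (ms p - m) <= e / 2 by apply/ltW/hN2; rewrite leq_maxr.
by rewrite (splitr e) addrA; apply: le_trans (hnorm_distD x (ms p) m) (lerD h1 h2).
Qed.

Lemma projection_theorem : exists y, M y /\ forall w, M w -> ip (x - y) w = 0.
Proof.
have [m Mm hm] := dist_attained; exists m; split => //.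
apply: min_dist_orth => //; first by case: hM.
by move=> m' Mm'; apply: le_trans hm (dist_le Mm').
Qed.

End ProjectionTheorem.

Lemma orthprojP X x : closed_subspace ip X ->
  X (orthproj ip X x) /\ forall w, X w -> ip (x - orthproj ip X x) w = 0.
Proof.
move=> hX; apply: (epsilon_spec (inhabits 0) (fun y => X y /\ forall w, X w -> ip (x - y) w = 0)).
exact: projection_theorem.
Qed.

Lemma orthproj_unique X x y : closed_subspace ip X -> X y ->
  (forall w, X w -> ip (x - y) w = 0) -> orthproj ip X x = y.
Proof.
move=> hX Xy hy; have [Xp hp] := orthprojP x hX; have hXs := hX.1.
apply/eqP; rewrite -subr_eq0; apply/eqP/ip_eq0.
rewrite {1}(_ : orthproj ip X x - y = (x - y) - (x - orthproj ip X x)).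
  by rewrite ipBl hy ?hp ?subrr //; apply: subspaceB.
by rewrite [RHS]addrC opprB subrKA.
Qed.

Lemma orthproj_id X x : closed_subspace ip X -> X x -> orthproj ip X x = x.
Proof. by move=> hX Xx; apply: orthproj_unique => // w _; rewrite subrr ip0l. Qed.

Lemma linear_orthproj X : closed_subspace ip X -> linear (orthproj ip X).
Proof.
move=> hX a x y; have hXs := hX.1.
have [Xx hx] := orthprojP x hX; have [Xy hy] := orthprojP y hX.
apply: orthproj_unique => //; first by apply: subspaceD => //; apply: subspaceZ.
move=> w Xw; rewrite (_ : a *: x + y - _ = a *: (x - orthproj ip X x) + (y - orthproj ip X y)).
  by rewrite ipPl hx ?hy // mulr0 addr0.
by rewrite scalerBr opprD !addrA; congr (_ + _); rewrite addrAC.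
Qed.

Lemma hnorm_orthproj_le X x : closed_subspace ip X -> hnorm ip (orthproj ip X x) <= hnorm ip x.
Proof.
move=> hX; have [Xp hp] := orthprojP x hX; set p := orthproj ip X x in Xp hp *.
rewrite hnorm_le (_ : sqnorm x = sqnorm p + 2 * complex.Re (ip p (x - p)) + sqnorm (x - p)).
  by rewrite ipC hp // conjC0 /=; have := sqnorm_ge0 (x - p); lra.
by rewrite -sqnormD subrKC.
Qed.

Lemma orthproj_comm X T S x : closed_subspace ip X -> linear T ->
  (forall u v, ip (T u) v = ip u (S v)) ->
  (forall u, X u -> X (T u)) -> (forall u, X u -> X (S u)) ->
  orthproj ip X (T x) = T (orthproj ip X x).
Proof.
move=> hX linT hTS hXT hXS; have [Xp hp] := orthprojP x hX.
apply: orthproj_unique => //; first exact: hXT.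
by move=> w Xw; rewrite -linB // hTS hp //; apply: hXS.
Qed.

Lemma linear_adjoint T Ta : h_adjoint ip T Ta -> linear Ta.
Proof.
move=> adjT a x y; apply: ip_extr => w.
by rewrite -adjT ipDr ipZr !adjT -ipZr -ipDr.
Qed.

Definition reduces (X : H -> Prop) (T Ta : H -> H) :=
  (forall u, X u -> X (T u)) /\ (forall u, X u -> X (Ta u)).

(** * The Wold subspaces of an isometry *)

Section Isometry.
Variables (S : {linear H -> H}) (Sa : H -> H).
Hypothesis isoS : h_isometry ip S.
Hypothesis adjS : h_adjoint ip S Sa.

Lemma linear_S : linear S.
Proof. by move=> a x y; rewrite linearP. Qed.

Lemma ip_adjr y w : ip y (S w) = ip (Sa y) w.
Proof. by rewrite ipC adjS -ipC. Qed.

(* polarization *)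
Lemma ip_isometry x y : ip (S x) (S y) = ip x y.
Proof.
pose f x y := ip (S x) (S y) - ip x y.
have f0 u : f u u = 0.
  by rewrite /f !ip_sqnorm -!hnorm_sq (isoS u) subrr.
have fD u v : f (u + v) (u + v) = f u u + f u v + f v u + f v v.
  by rewrite /f !linearD !ipDl !ipDr; ring.
have fZl (a : R[i]) u v : f (a *: u) v = a * f u v by rewrite /f !linearZ !ipZl mulrBr.
have fZr (a : R[i]) u v : f u (a *: v) = a^* * f u v by rewrite /f !linearZ !ipZr mulrBr.
have fC : f x y + f y x = 0 by have := fD x y; rewrite !f0 => ->; ring.
have fCi : f x y - f y x = 0.
  have := fD x ('i *: y); rewrite !f0 fZl fZr (_ : 'i^* = - 'i :> R[i]); last first.
    by apply/eqP; rewrite eq_complex /= oppr0 !eqxx.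
  move/esym/eqP; rewrite (_ : _ + _ = 'i * (f y x - f x y)); last by ring.
  rewrite mulf_eq0 subr_eq0 => /orP[|/eqP->]; last by rewrite subrr.
  by rewrite eq_complex /= oner_eq0 andbF.
have fxy : f x y = f y x by apply/eqP; rewrite -subr_eq0 fCi.
move: fC; rewrite fxy -mulr2n => /eqP; rewrite mulrn_eq0 /= => /eqP fyx.
by apply/eqP; rewrite -subr_eq0 -/(f x y) fxy fyx.
Qed.

Lemma isometry_adjK : cancel S Sa.
Proof. by move=> x; apply: ip_extr => w; rewrite -adjS ip_isometry. Qed.

Lemma hnorm_adj_le x : hnorm ip (Sa x) <= hnorm ip x.
Proof.
have := Re_ip_le (S (Sa x)) x; rewrite adjS -/(sqnorm (Sa x)) -hnorm_sq (isoS (Sa x)).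
have := hnorm_ge0 (Sa x); have := hnorm_ge0 x.
move: (hnorm ip (Sa x)) (hnorm ip x) => a b; nra.
Qed.

Lemma iter_adjK t : cancel (iter t S) (iter t Sa).
Proof. by elim: t => [|t IH] x //; rewrite iterSr iterS isometry_adjK IH. Qed.

Lemma Huni_iterK t x : Huni S x -> iter t S (iter t Sa x) = x.
Proof. by move=> hx; have [w [_ ->]] := hx t; rewrite iter_adjK. Qed.

Lemma ip_iter t x y : ip (iter t S x) y = ip x (iter t Sa y).
Proof. by elim: t x y => [|t IH] x y //=; rewrite adjS IH -iterSr. Qed.

Lemma ip_iter_isometry t x y : ip (iter t S x) (iter t S y) = ip x y.
Proof. by rewrite ip_iter iter_adjK. Qed.

Lemma closed_subspace_ker : closed_subspace ip (kerS Sa).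
Proof.
exact: (closed_subspace_preim closed_subspace_zero (linear_adjoint adjS) hnorm_adj_le).
Qed.

Lemma closed_subspace_Huni : closed_subspace ip (Huni S).
Proof.
have hSt t : closed_set ip (img (iter t S) (fun _ => True)).
  apply: closed_img_isometry; [exact: linear_iter linear_S | | by []].
  by elim: t => [|t IH] x //=; rewrite isoS.
split; last by move=> u l hu hl t; exact: (hSt t u l (fun p => hu p t) hl).
split; first by move=> t; exists 0; rewrite lin0 //; exact: linear_iter linear_S.
move=> c x y hx hy t; have [x' [_ ->]] := hx t; have [y' [_ ->]] := hy t.
by exists (c *: x' + y'); split => //; rewrite (linear_iter t linear_S).
Qed.

Lemma closed_subspace_Hiso : closed_subspace ip (Hiso ip S Sa).
Proof. exact: closed_subspace_span. Qed.

Lemma Hiso_gen t e : kerS Sa e -> Hiso ip S Sa (iter t S e).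
Proof. by move=> he; apply: mem_closed_span; exists t, e. Qed.

Lemma Huni_S y : Huni S y -> Huni S (S y).
Proof. by move=> hy t; have [w [_ ->]] := hy t; exists (S w); rewrite -iterS iterSr. Qed.

Lemma Huni_adj y : Huni S y -> Huni S (Sa y).
Proof. by move=> hy t; have [w [_ ->]] := hy t.+1; exists w; rewrite iterS isometry_adjK. Qed.

Lemma Hiso_S y : Hiso ip S Sa y -> Hiso ip S Sa (S y).
Proof.
move=> hy; apply: (closed_span_min (closed_subspace_preim closed_subspace_Hiso linear_S _) _ hy).
  by move=> x; rewrite isoS.
by move=> _ [t [e [he ->]]]; rewrite /= -iterS; apply: Hiso_gen.
Qed.

Lemma Huni_stable F c y : (forall x, F (S x) = c *: S (F x)) -> Huni S y -> Huni S (F y).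
Proof.
move=> hF hy t; have [w [_ ->]] := hy t; exists (c ^+ t *: F w); split => //.
by rewrite (iter_comm_scale linear_S hF) (linZ (linear_iter t linear_S)).
Qed.

Lemma Hiso_stable F c y : linear F -> (forall x, hnorm ip (F x) <= hnorm ip x) ->
  (forall x, F (S x) = c *: S (F x)) -> (forall e, kerS Sa e -> kerS Sa (F e)) ->
  Hiso ip S Sa y -> Hiso ip S Sa (F y).
Proof.
move=> linF hnF hF hker hy.
apply: (closed_span_min (closed_subspace_preim closed_subspace_Hiso linF hnF) _ hy).
move=> _ [t [e [he ->]]]; rewrite /= (iter_comm_scale linear_S hF).
by apply: (subspaceZ _ closed_subspace_Hiso.1); apply: Hiso_gen; apply: hker.
Qed.

Lemma Huni_orthproj X y : closed_subspace ip X -> reduces X S Sa ->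
  Huni S y -> Huni S (orthproj ip X y).
Proof.
move=> hX [XS XSa]; apply: (Huni_stable (c := 1)) => x.
by rewrite scale1r (orthproj_comm _ hX linear_S adjS).
Qed.

Lemma Hiso_orthproj X y : closed_subspace ip X -> reduces X S Sa ->
  Hiso ip S Sa y -> Hiso ip S Sa (orthproj ip X y).
Proof.
move=> hX [XS XSa]; apply: (Hiso_stable (c := 1) (linear_orthproj hX)).
- by move=> x; apply: hnorm_orthproj_le.
- by move=> x; rewrite scale1r (orthproj_comm _ hX linear_S adjS).
move=> e he; rewrite /kerS -(orthproj_comm _ hX (linear_adjoint adjS) _ XSa XS).
  by rewrite -(lin0 (linear_orthproj hX)); congr (orthproj ip X _); exact: he.
by move=> u v; rewrite ip_adjr.
Qed.

(* [<S^t e, u> = <e, Sa^t u> = <Sa e, Sa^(t+1) u> = 0] for [e] in [ker Sa] *)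
Lemma Hiso_wandering_eq0 u : Hiso ip S Sa u ->
  (forall t, S (Sa (iter t Sa u)) = iter t Sa u) -> u = 0.
Proof.
move=> hu hS; apply: ip_eq0.
apply: (closed_span_min (closed_subspace_orth u) _ hu) => _ [t [e [he ->]]].
by rewrite /= ip_iter -hS ip_adjr he ip0l.
Qed.

End Isometry.

(** * Doubly non-commuting isometries *)

Section DoublyNonCommuting.
Variables (n : nat) (z : 'I_n -> 'I_n -> R[i]).
Hypothesis hz : forall i j : 'I_n, i != j -> `|z i j| = 1 /\ z j i = (z i j)^*.
Variables (V : 'I_n -> {linear H -> H}) (Va : 'I_n -> H -> H).
Hypothesis hiso : forall i, h_isometry ip (V i).
Hypothesis hadj : forall i, h_adjoint ip (V i) (Va i).
Hypothesis hdnc : forall i j : 'I_n, i != j ->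
  forall x, Va i (V j x) = (z i j)^* *: V j (Va i x).

Local Notation Vf := (fun i => (V i : H -> H)).

Lemma linear_Va i : linear (Va i).
Proof. exact: linear_adjoint (hadj i). Qed.

Lemma z_unitary i j : i != j -> z i j * (z i j)^* = 1.
Proof. by move=> ij; rewrite -normCK (hz ij).1 expr1n. Qed.

Lemma VaV i : cancel (V i) (Va i).
Proof. exact: isometry_adjK (hiso i) (hadj i). Qed.

(* [y := V a V b x - z_ab V b V a x] is killed by [Va a] and [Va b], so [<y, y> = 0] *)
Lemma V_comm a b x : a != b -> V a (V b x) = z a b *: V b (V a x).
Proof.
move=> ab; set y := V a (V b x) - z a b *: V b (V a x).
have ya : Va a y = 0.
  rewrite /y (linB (linear_Va a)) (linZ (linear_Va a)) VaV hdnc // VaV scalerA.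
  by rewrite z_unitary // scale1r subrr.
have yb : Va b y = 0.
  rewrite /y (linB (linear_Va b)) (linZ (linear_Va b)) VaV hdnc 1?eq_sym // VaV.
  by rewrite (hz ab).2 conjCK subrr.
apply/eqP; rewrite -subr_eq0 -/y; apply/eqP/ip_eq0.
rewrite {2}/y ipBr ipZr (ip_adjr (hadj b)) (ip_adjr (hadj a)) ya yb.
by rewrite !ip0l mulr0 subrr.
Qed.

Lemma reduces_ker a b : a != b -> reduces (kerS (Va a)) (V b) (Va b).
Proof.
move=> ab; split=> y; rewrite /kerS => hy; first by rewrite hdnc // hy linear0 scaler0.
apply: ip_extr => w; rewrite -!hadj V_comm 1?eq_sym // ipZl hadj hy.
by rewrite ip0r mulr0 ip0r.
Qed.

Lemma reduces_Huni a b : reduces (Huni (V a)) (V b) (Va b).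
Proof.
have [<-|ab] := eqVneq a b.
  by split=> y; [apply: Huni_S | apply: (Huni_adj (hiso a) (hadj a))].
split=> y; apply: Huni_stable => x.
  by apply: V_comm; rewrite eq_sym.
by apply: hdnc; rewrite eq_sym.
Qed.

Lemma reduces_Hiso a b : a != b -> reduces (Hiso ip (V a) (Va a)) (V b) (Va b).
Proof.
move=> ab; have ba : b != a by rewrite eq_sym.
split=> y; apply: Hiso_stable.
- exact: linear_S.
- by move=> x; rewrite hiso.
- by move=> x; apply: V_comm.
- by move=> e; apply: (reduces_ker ab).1.
- exact: linear_Va.
- exact: hnorm_adj_le (hiso b) (hadj b).
- by move=> x; apply: hdnc.
- by move=> e; apply: (reduces_ker ab).2.
Qed.

Lemma Hiso_V a b y : Hiso ip (V a) (Va a) y -> Hiso ip (V a) (Va a) (V b y).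
Proof.
have [<-|ab] := eqVneq a b; first exact: (Hiso_S (hiso a)).
exact: (reduces_Hiso ab).1.
Qed.

Lemma linear_prodV s m : linear (prodV Vf s m).
Proof.
elim: s => [|j s IH] /=; first by [].
exact: (linear_comp (linear_iter (m j) (linear_S (V j))) IH).
Qed.

Lemma hnorm_prodV s m x : hnorm ip (prodV Vf s m x) = hnorm ip x.
Proof. by elim: s => [|j s IH] //=; elim: (m j) => [|t IHt] //=; rewrite hiso. Qed.

Lemma eq_prodV s m m' : {in s, m =1 m'} -> prodV Vf s m =1 prodV Vf s m'.
Proof.
elim: s => [|j s IH] h x //=.
by rewrite h ?mem_head // IH // => j' hj'; apply: h; rewrite in_cons hj' orbT.
Qed.

Lemma prodV0 s x : prodV Vf s (fun _ => 0%N) x = x.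
Proof. by elim: s => //= j s ->. Qed.

Lemma prodV_delta s j t x : uniq s -> j \in s ->
  prodV Vf s (fun j' => if j' == j then t else 0%N) x = iter t (V j) x.
Proof.
elim: s => [|j0 s IH] //= /andP[nj0 us]; rewrite in_cons => /orP[/eqP ej|js].
  subst j0; rewrite eqxx (@eq_prodV _ _ (fun _ => 0%N)) ?prodV0 // => j' hj'.
  by case: eqP => // e; subst j'; rewrite hj' in nj0.
have -> : (j0 == j) = false by apply/negbTE; apply: contraNneq nj0 => ->.
by rewrite /= IH.
Qed.

Lemma prodV_stable (P : H -> Prop) s m y :
  (forall j, j \in s -> forall u, P u -> P (V j u)) -> P y -> P (prodV Vf s m y).
Proof.
elim: s => [|j s IH] //= hP hy; apply: (iter_stable (P := P)); first exact: hP (mem_head _ _).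
by apply: IH => // j' hj'; apply: hP; rewrite in_cons hj' orbT.
Qed.

Lemma prodV_Vscale i s k x : uniq s -> i \in s ->
  exists2 c : R[i], c * c^* = 1 &
    V i (prodV Vf s k x) = c *: prodV Vf s (fun j => if j == i then (k j).+1 else k j) x.
Proof.
elim: s => [|j s IH] //= /andP[nj us]; rewrite in_cons => /orP[/eqP ej|i_s].
  subst j; exists 1; first by rewrite conjC1 mulr1.
  rewrite scale1r eqxx -iterS; congr (iter _ _ _); apply: eq_prodV => j' hj'.
  by case: eqP => // e; subst j'; rewrite hj' in nj.
have ji : (j == i) = false by apply/negbTE; apply: contraNneq nj => ->.
have [c c1 e] := IH us i_s.
exists (z i j ^+ k j * c).
  by rewrite rmorphM rmorphXn mulrACA -exprMn z_unitary ?expr1n ?mul1r // eq_sym ji.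
rewrite ji (iter_comm_scale (c := z i j) (linear_S (V j))); last first.
  by move=> y; apply: V_comm; rewrite eq_sym ji.
by rewrite e (linZ (linear_iter _ (linear_S (V j)))) scalerA.
Qed.

(** * The decomposition of [H_A] *)

Section DecompositionOfHA.
Variable A : {set 'I_n}.

Local Notation W := (WA Vf Va A).

Definition kerA x := forall i, i \in A -> Va i x = 0.

Lemma WA_prodV_onto s : {subset s <= ~: A} ->
  forall x, kerA x -> (forall j, j \notin A -> Huni (V j) x) ->
  forall m, exists2 y, kerA y /\ (forall j, j \notin A -> Huni (V j) y) & x = prodV Vf s m y.
Proof.
elim: s => [|j s IH] hs x hK hU m; first by exists x.
have jA : j \notin A by rewrite -finset.in_setC; apply: hs; exact: mem_head.
set x' := iter (m j) (Va j) x.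
have hs' : {subset s <= ~: A} by move=> j' hj'; apply: hs; rewrite in_cons hj' orbT.
have hK' : kerA x'.
  move=> i iA; apply: (iter_stable (P := kerS (Va i))) (hK i iA) => u.
  by apply: (reduces_ker _).2; apply: contraNneq jA => <-.
have hU' j' : j' \notin A -> Huni (V j') x'.
  move=> hj'; apply: (iter_stable (P := Huni (V j'))) (hU j' hj') => u.
  exact: (reduces_Huni _ _).2.
have [y hy ex'] := IH hs' x' hK' hU' m.
by exists y => //=; rewrite -ex' /x' (Huni_iterK (hiso j) (hadj j)) //; apply: hU.
Qed.

Lemma WAE x : W x <-> kerA x /\ (forall j, j \notin A -> Huni (V j) x).
Proof.
split=> [hW | [hK hU] m].
  split; first by have [y [? ->]] := hW (fun _ => 0%N); rewrite prodV0.
  move=> j jA t; have [y [_ ->]] := hW (fun j' => if j' == j then t else 0%N).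
  by exists y; rewrite prodV_delta ?enum_uniq ?mem_enum ?finset.in_setC.
have [|y [hy _] ->] := WA_prodV_onto (s := enum (~: A)) _ hK hU m; last by exists y.
by move=> j; rewrite mem_enum.
Qed.

Lemma closed_subspace_WA : closed_subspace ip W.
Proof.
have Huni_cs j := closed_subspace_Huni (hiso j).
have ker_cs i := closed_subspace_ker (hiso i) (hadj i).
split; first split.
- apply/WAE; split=> [i _ | j _]; first exact: (ker_cs i).1.1.
  exact: (Huni_cs j).1.1.
- move=> a x y /WAE[hKx hUx] /WAE[hKy hUy]; apply/WAE; split=> [i iA | j jA].
    by apply: (ker_cs i).1.2; [apply: hKx | apply: hKy].
  by apply: (Huni_cs j).1.2; [apply: hUx | apply: hUy].
move=> u l hu hl; apply/WAE; split=> [i iA | j jA].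
  by apply: ((ker_cs i).2 u l _ hl) => p; have /WAE[hK _] := hu p; apply: hK.
by apply: ((Huni_cs j).2 u l _ hl) => p; have /WAE[_ hU] := hu p; apply: hU.
Qed.

Lemma WA_reduces i : i \notin A -> reduces W (V i) (Va i).
Proof.
move=> iA; split=> x /WAE[hK hU]; apply/WAE; split=> [a aA | j jA].
- by apply: (reduces_ker _).1 (hK a aA); apply: contraNneq iA => <-.
- exact: (reduces_Huni _ _).1 (hU j jA).
- by apply: (reduces_ker _).2 (hK a aA); apply: contraNneq iA => <-.
- exact: (reduces_Huni _ _).2 (hU j jA).
Qed.

Lemma WA_V_onto i y : i \notin A -> W y -> exists x, W x /\ y = V i x.
Proof.
move=> iA hy; exists (Va i y); split; first exact: (WA_reduces iA).2.
have /WAE[_ hU] := hy; exact: esym (Huni_iterK (hiso i) (hadj i) 1 (hU i iA)).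
Qed.

(* the restriction of [Va i] is the only adjoint of [V i] on [W] *)
Lemma WA_adjoint_dnc i j : i \notin A -> j \notin A -> i != j ->
  forall S : H -> H, (forall x, W x -> W (S x)) ->
  (forall x y, W x -> W y -> ip (V i x) y = ip x (S y)) ->
  forall x, W x -> S (V j x) = (z i j)^* *: V j (S x).
Proof.
move=> iA jA ij S hS hSa.
have eqS y : W y -> S y = Va i y.
  move=> Wy; apply/eqP; rewrite -subr_eq0; apply/eqP/ip_eq0; set d := S y - Va i y.
  have Wd : W d by apply: subspaceB closed_subspace_WA.1 (hS _ Wy) ((WA_reduces iA).2 _ Wy).
  by rewrite {2}/d ipBr -hSa // hadj subrr.
move=> x Wx; rewrite eqS; last exact: (WA_reduces jA).1.
by rewrite hdnc // -eqS.
Qed.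

Lemma img_V_prodV_WA i k : i \in A ->
  seteq (img (V i) (img (prodV Vf (enum A) k) W))
        (img (prodV Vf (enum A) (fun j => if j == i then (k j).+1 else k j)) W).
Proof.
move=> iA y; have iA' : i \in enum A by rewrite mem_enum.
have WZ c w : W w -> W (c *: w) by apply: subspaceZ; exact: closed_subspace_WA.1.
split=> [[_ [[w [Ww ->]] ->]] | [w [Ww ->]]].
  have [c _ ->] := prodV_Vscale k w (enum_uniq _) iA'.
  by exists (c *: w); rewrite (linZ (linear_prodV _ _)); split => //; apply: WZ.
have [c c1 e] := prodV_Vscale k w (enum_uniq _) iA'.
exists (prodV Vf (enum A) k (c^* *: w)); split; first by exists (c^* *: w); split => //; apply: WZ.
by rewrite (linZ (linear_prodV _ _)) linearZ /= e scalerA mulrC c1 scale1r.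
Qed.

Lemma ip_prodV_eq0 s k k' x y : uniq s -> {subset s <= A} -> kerA x -> kerA y ->
  (exists2 j, j \in s & k j != k' j) -> ip (prodV Vf s k x) (prodV Vf s k' y) = 0.
Proof.
move=> + + hx hy; elim: s => [|j s IH] /=; first by move=> _ _ [].
move=> /andP[nj us] sA [j0 j0s hk]; have jA : j \in A by apply: sA; exact: mem_head.
have ker_prodV m u : kerA u -> kerS (Va j) (prodV Vf s m u).
  move=> hu; apply: prodV_stable (hu j jA) => j' j's v.
  by apply: (reduces_ker _).1; apply: contraNneq nj => ->.
have ip_iterV := ip_iter_isometry (hiso j) (hadj j).
case: (ltngtP (k j) (k' j)) => hkj.
- rewrite -(subnKC hkj) iterD iterSr ip_iterV (ip_adjr (hadj j)).
  by rewrite (ker_prodV _ _ hx) ip0l.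
- rewrite -(subnKC hkj) iterD iterSr ip_iterV hadj.
  by rewrite (ker_prodV _ _ hy) ip0r.
rewrite hkj ip_iterV; apply: IH => // [i i_s|]; first by apply: sA; rewrite in_cons i_s orbT.
exists j0 => //; move: j0s; rewrite in_cons => /orP[/eqP ej0|//].
by move: hk; rewrite ej0 hkj eqxx.
Qed.

Local Notation multi_index := {k : 'I_n -> nat | forall j, j \notin A -> k j = 0}.

Definition piece (k : multi_index) := img (prodV Vf (enum A) (proj1_sig k)) W.

Lemma closed_subspace_piece k : closed_subspace ip (piece k).
Proof.
split; first exact: subspace_img (linear_prodV _ _) closed_subspace_WA.1.
exact: closed_img_isometry (linear_prodV _ _) (hnorm_prodV _ _) closed_subspace_WA.2.
Qed.

Lemma pieces_orth (k k' : multi_index) : k <> k' ->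
  forall x y, piece k x -> piece k' y -> ip x y = 0.
Proof.
move: k k' => [k hk] [k' hk'] /= kk' _ _ [x [Wx ->]] [y [Wy ->]].
have [/existsP[j kj] | /existsPn eqk] := boolP [exists j, k j != k' j]; last first.
  have ekk : k = k' by apply: functional_extensionality => j; apply/eqP; rewrite -[_ == _]negbK eqk.
  by case: kk'; subst k'; congr exist; exact: proof_irrelevance.
have jA : j \in A by apply: contraNT kj => jA; rewrite hk // hk'.
have /WAE[hKx _] := Wx; have /WAE[hKy _] := Wy.
apply: ip_prodV_eq0 => //; first exact: enum_uniq.
  by move=> i; rewrite mem_enum.
by exists j; rewrite ?mem_enum.
Qed.

Definition Puni_seq (s : seq 'I_n) : H -> H :=
  foldr (fun j f => fun x => orthproj ip (Huni (V j)) (f x)) id s.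

Definition Piso_seq (s : seq 'I_n) : H -> H :=
  foldr (fun i f => fun x => orthproj ip (Hiso ip (V i) (Va i)) (f x))
    (Puni_seq (enum (~: A))) s.

Lemma HAE : HA ip Vf Va A = img (Piso_seq (enum A)) (fun _ => True).
Proof. by []. Qed.

Lemma Huni_Puni_seq s x j : j \in s -> Huni (V j) (Puni_seq s x).
Proof.
elim: s => [|j0 s IH] //=; rewrite in_cons => /orP[/eqP ->|js].
  exact: (orthprojP _ (closed_subspace_Huni (hiso j0))).1.
exact: (Huni_orthproj (hadj j) (closed_subspace_Huni (hiso j0)) (reduces_Huni j0 j) (IH js)).
Qed.

Lemma Piso_seq_mem s x : uniq s -> {subset s <= A} ->
  (forall i, i \in s -> Hiso ip (V i) (Va i) (Piso_seq s x)) /\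
  (forall j, j \notin A -> Huni (V j) (Piso_seq s x)).
Proof.
elim: s => [|i0 s IH] /=.
  by move=> _ _; split=> // j jA; apply: Huni_Puni_seq; rewrite mem_enum finset.in_setC.
move=> /andP[ni0 us] sA; have i0A : i0 \in A by apply: sA; exact: mem_head.
have [|IHiso IHuni] := IH us; first by move=> i hi; apply: sA; rewrite in_cons hi orbT.
have hX := closed_subspace_Hiso (V i0) (Va i0).
split=> [i | j jA].
  rewrite in_cons => /orP[/eqP -> | i_s]; first exact: (orthprojP _ hX).1.
  have i0i : i0 != i by apply: contraNneq ni0 => ->.
  exact: (Hiso_orthproj (hadj i) hX (reduces_Hiso i0i) (IHiso i i_s)).
have i0j : i0 != j by apply: contraNneq jA => <-.
exact: (Huni_orthproj (hadj j) hX (reduces_Hiso i0j) (IHuni j jA)).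
Qed.

Lemma Puni_seq_id s x : (forall j, j \in s -> Huni (V j) x) -> Puni_seq s x = x.
Proof.
elim: s => [|j s IH] //= h; rewrite IH => [|j' hj']; last by apply: h; rewrite in_cons hj' orbT.
by apply: orthproj_id (closed_subspace_Huni (hiso j)) _; apply: h; exact: mem_head.
Qed.

Lemma Piso_seq_id s x : (forall i, i \in s -> Hiso ip (V i) (Va i) x) ->
  (forall j, j \notin A -> Huni (V j) x) -> Piso_seq s x = x.
Proof.
move=> hI hU; elim: s hI => [|i s IH] /= hI.
  by apply: Puni_seq_id => j; rewrite mem_enum finset.in_setC; apply: hU.
rewrite IH => [|i' hi']; last by apply: hI; rewrite in_cons hi' orbT.
by apply: orthproj_id (closed_subspace_Hiso _ _) _; apply: hI; exact: mem_head.
Qed.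

Definition span_pieces := closed_span ip (fun y => exists k, piece k y).

Lemma span_pieces_prodV k w : W w -> span_pieces (prodV Vf (enum A) k w).
Proof.
move=> Ww; apply: mem_closed_span.
have hk j : j \notin A -> (if j \in A then k j else 0%N) = 0 by move/negbTE->.
exists (exist _ (fun j => if j \in A then k j else 0%N) hk), w; split => //=.
by apply: eq_prodV => j; rewrite mem_enum => ->.
Qed.

Lemma span_pieces_Hiso i x : i \in A -> span_pieces x -> Hiso ip (V i) (Va i) x.
Proof.
move=> iA; apply: closed_span_min (closed_subspace_Hiso _ _) _ => _ [k [w [Ww ->]]].
apply: (prodV_stable (P := Hiso ip (V i) (Va i))) => [j _ u|]; first exact: Hiso_V.
by have /WAE[hK _] := Ww; apply: (Hiso_gen 0); apply: hK.
Qed.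

Lemma span_pieces_Huni j x : j \notin A -> span_pieces x -> Huni (V j) x.
Proof.
move=> jA; apply: closed_span_min (closed_subspace_Huni (hiso j)) _ => _ [k [w [Ww ->]]].
apply: (prodV_stable (P := Huni (V j))) => [j' _ u|]; first exact: (reduces_Huni j j').1.
by have /WAE[_ hU] := Ww; apply: hU.
Qed.

Lemma reduces_wandering (P : H -> Prop) i t u : subspace P -> reduces P (V i) (Va i) -> P u ->
  P (iter t (Va i) u - V i (Va i (iter t (Va i) u))).
Proof.
move=> hP [PV PVa] hu; have hut := iter_stable t PVa hu.
exact: subspaceB hP hut (PV _ (PVa _ hut)).
Qed.

Lemma orth_pieces_eq0 s u : uniq s -> {subset s <= A} ->
  (forall j, j \notin A -> Huni (V j) u) -> (forall i, i \in s -> Hiso ip (V i) (Va i) u) ->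
  (forall i, i \in A -> i \notin s -> Va i u = 0) ->
  (forall k w, W w -> ip (prodV Vf s k w) u = 0) -> u = 0.
Proof.
elim: s u => [|i s IH] u /=.
  move=> _ _ hU _ hK ho; apply/ip_eq0/(ho (fun _ => 0%N)).
  by apply/WAE; split=> // i iA; apply: hK.
move=> /andP[ni us] sA hU hI hK ho; have iA : i \in A by apply: sA; exact: mem_head.
have i's i' : i' \in s -> i' != i by move=> hi'; apply: contraNneq ni => <-.
pose ut t := iter t (Va i) u - V i (Va i (iter t (Va i) u)).
have ut0 t : ut t = 0.
  apply: IH => // [i' hi'|j jA|i' hi'|i' i'A ni's|k w Ww].
  - by apply: sA; rewrite in_cons hi' orbT.
  - exact: reduces_wandering (closed_subspace_Huni (hiso j)).1 (reduces_Huni j i) (hU j jA).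
  - apply: reduces_wandering (closed_subspace_Hiso _ _).1 (reduces_Hiso (i's _ hi')) _.
    by apply: hI; rewrite in_cons hi' orbT.
  - have [->|i'i] := eqVneq i' i; first by rewrite /ut (linB (linear_Va i)) VaV subrr.
    apply: reduces_wandering (closed_subspace_ker (hiso i') (hadj i')).1 (reduces_ker i'i) _.
    by apply: hK; rewrite // in_cons negb_or i'i.
  have /WAE[hKw _] := Ww.
  have ker_i : kerS (Va i) (prodV Vf s k w).
    apply: (prodV_stable (P := kerS (Va i))) (hKw i iA) => j j_s v.
    by apply: (reduces_ker _).1; rewrite eq_sym i's.
  rewrite /ut ipBr (ip_adjr (hadj i)) ker_i ip0l subr0 -(ip_iter (hadj i)).
  have := ho (fun j => if j == i then t else k j) w Ww; rewrite /= eqxx.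
  by rewrite (eq_prodV (m' := k)) // => j j_s; rewrite ifN // i's.
apply: (Hiso_wandering_eq0 (hadj i) (hI i (mem_head _ _))) => t.
by apply/esym/eqP; rewrite -subr_eq0; apply/eqP/ut0.
Qed.

Lemma HA_span x : HA ip Vf Va A x <-> span_pieces x.
Proof.
have sA : {subset enum A <= A} by move=> i; rewrite mem_enum.
rewrite HAE; split=> [[y [_ ->]] | hx]; last first.
  exists x; split => //; apply/esym/Piso_seq_id => [i|j jA]; last exact: span_pieces_Huni.
  by rewrite mem_enum => iA; apply: span_pieces_Hiso.
set p := Piso_seq (enum A) y.
have [hIp hUp] := Piso_seq_mem y (enum_uniq A) sA.
have [m [hm hpm]] := projection_theorem p (closed_subspace_span (fun y => exists k, piece k y)).
suff -> : p = m by [].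
apply/eqP; rewrite -subr_eq0; apply/eqP.
apply: (orth_pieces_eq0 (enum_uniq A) sA) => [j jA|i i_s|i iA|k w Ww].
- by apply: subspaceB (closed_subspace_Huni (hiso j)).1 (hUp j jA) (span_pieces_Huni jA hm).
- apply: subspaceB (closed_subspace_Hiso _ _).1 (hIp i i_s) (span_pieces_Hiso _ hm).
  exact: sA.
- by rewrite mem_enum iA.
by rewrite ipC hpm ?conjC0 //; apply: span_pieces_prodV.
Qed.

Lemma WA_span x : W x -> span_pieces x.
Proof. by move=> Wx; rewrite -(prodV0 (enum A) x); apply: span_pieces_prodV. Qed.

End DecompositionOfHA.

End DoublyNonCommuting.

End InnerProductSpace.

Theorem theorem3p6
  (R : realType) (H : lmodType R[i]) (ip : H -> H -> R[i])
  (hH : is_hilbert ip)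
  (n : nat) (hn : (0 < n)%N)
  (z : 'I_n -> 'I_n -> R[i])
  (hz : forall i j : 'I_n, i != j -> `|z i j| = 1 /\ z j i = (z i j)^*)
  (V : 'I_n -> {linear H -> H}) (Va : 'I_n -> H -> H)
  (hiso : forall i, h_isometry ip (V i))
  (hadj : forall i, h_adjoint ip (V i) (Va i))
  (hdnc : forall i j : 'I_n, i != j ->
            forall x, Va i (V j x) = (z i j)^* *: V j (Va i x))
  (A : {set 'I_n}) :
  let Vf := fun i => (V i : H -> H) in
  let W := WA Vf Va A in
  let HA_ := HA ip Vf Va A in
  [/\ (forall x, W x -> HA_ x) /\
      orth_dsum ip
        (fun k : {k : 'I_n -> nat | forall j, j \notin A -> k j = 0} =>
           img (prodV Vf (enum A) (proj1_sig k)) W)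
        HA_,
      (* (1) W reduces V_i and V_i|_W is unitary, for i in A^c *)
      (forall i, i \notin A ->
         [/\ forall x, W x -> W (V i x),
             forall x, W x -> W (Va i x) &
             forall y, W y -> exists x, W x /\ y = V i x]),
      (* (2) (V_i|_W)^* (V_j|_W) = conj(z_ij) (V_j|_W) (V_i|_W)^* on W *)
      (forall i j, i \notin A -> j \notin A -> i != j ->
         forall S : H -> H, (forall x, W x -> W (S x)) ->
           (forall x y, W x -> W y -> ip (V i x) y = ip x (S y)) ->
           forall x, W x -> S (V j x) = (z i j)^* *: V j (S x)),
      (* (3) V_i^* |_W = 0 for i in A *)
      (forall i, i \in A -> forall x, W x -> Va i x = 0) &
      (* (4) *)
      (forall i, i \in A -> forall k : 'I_n -> nat,
         seteq (img (V i) (img (prodV Vf (enum A) k) W))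
               (img (prodV Vf (enum A)
                       (fun j => if j == i then (k j).+1 else k j)) W))].
Proof.
move=> Vf W HA_; have spanE := HA_span hH hz hiso hadj hdnc A.
split.
- split; first by move=> x /WA_span /spanE.
  split; last exact: spanE.
    exact: (closed_subspace_piece hH hz hiso hadj hdnc).
  exact: (pieces_orth hH hz hiso hadj hdnc).
- move=> i iA; have [WV WVa] := WA_reduces hH hz hiso hadj hdnc iA.
  by split=> // y; apply: (WA_V_onto hH hz hiso hadj hdnc iA).
- exact: (WA_adjoint_dnc hH hz hiso hadj hdnc).
- by move=> i iA x /(WAE hH hz hiso hadj hdnc)[hK _]; apply: hK.
by move=> i iA k; apply: (img_V_prodV_WA hH hz hiso hadj hdnc k iA).
Qed.
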